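(* Let $m>n>0$ and $c>0$ be constants. Let $f,g\in C(\mathbb{R}_0^+,\mathbb{R}_0^+)$, let $w\in C(\mathbb{R}_0^+,\mathbb{R}_0^+)$ be nondecreasing with $w(x)>0$ for $x>0$, and let $\alpha\in C^1(\mathbb{R}_0^+,\mathbb{R}_0^+)$ be nondecreasing with $\alpha(t)\le t$. Suppose $u\in C(\mathbb{R}_0^+,\mathbb{R}_0^+)$ satisfies, for all $t\ge0$, $$u^m(t)\le c^{m/(m-n)}+\frac{m}{m-n}\Big(\int_0^{\alpha(t)}f(s)u^n(s)w(u(s))\,ds+\int_0^t g(s)u^n(s)w(u(s))\,ds\Big).$$ Let $\Psi(x)=\int_1^x\frac{ds}{w(s^{1/(m-n)})}$ for $x>0$, and let $\tau>0$ be such that for all $t\in[0,\tau]$, $$\Psi(c)+\int_0^{\alpha(t)}f(s)\,ds+\int_0^{t}g(s)\,ds\in\mathrm{Dom}(\Psi^{-1}).$$ Then for all $t\in[0,\tau]$, $$u(t)\le\Big\{\Psi^{-1}\Big[\Psi(c)+\int_0^{\alpha(t)}f(s)\,ds+\int_0^{t}g(s)\,ds\Big]\Big\}^{1/(m-n)}.$$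
   Context: $\mathbb{R}_0^+=[0,\infty)$. $\Psi$ is strictly increasing on $(0,\infty)$, $\Psi^{-1}$ denotes its inverse, and $\mathrm{Dom}(\Psi^{-1})=\Psi((0,\infty))$. *)

From Stdlib Require Import Reals Lra ClassicalEpsilon.
Open Scope R_scope.

(* Real power x^a for x >= 0 and a > 0, with the convention 0^a = 0
   (Stdlib's Rpower 0 a = 1, so we patch it at 0). *)
Definition rpow (x a : R) : R :=
  if Rle_dec x 0 then 0 else Rpower x a.

(* Definite Riemann integral int_a^b f (oriented, as in Stdlib's RiemannInt);
   its value is the RiemannInt whenever f is Riemann integrable on [a,b]. *)
Definition integral (f : R -> R) (a b : R) : R :=
  epsilon (inhabits 0)
    (fun I => exists pr : Riemann_integrable f a b, RiemannInt pr = I).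

Definition cont_nonneg (f : R -> R) : Prop :=
  forall x, 0 <= x -> forall eps, 0 < eps -> exists delta, 0 < delta /\
    forall y, 0 <= y -> Rabs (y - x) < delta -> Rabs (f y - f x) < eps.

Definition nonneg_valued (f : R -> R) : Prop :=
  forall x, 0 <= x -> 0 <= f x.

Definition C0_nonneg (f : R -> R) : Prop := cont_nonneg f /\ nonneg_valued f.

Definition nondecr_nonneg (f : R -> R) : Prop :=
  forall x y, 0 <= x -> x <= y -> f x <= f y.

Definition deriv_nonneg (f f' : R -> R) : Prop :=
  forall x, 0 <= x -> forall eps, 0 < eps -> exists delta, 0 < delta /\
    forall y, 0 <= y -> y <> x -> Rabs (y - x) < delta ->
      Rabs ((f y - f x) / (y - x) - f' x) < eps.

Definition C1_nonneg (f : R -> R) : Prop :=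
  nonneg_valued f /\ exists f', deriv_nonneg f f' /\ cont_nonneg f'.

(* Psi(x) = int_1^x ds / w(s^(1/(m-n))), for x > 0; k stands for m - n. *)
Definition Psi (w : R -> R) (k : R) (x : R) : R :=
  integral (fun s => / w (rpow s (/ k))) 1 x.

Definition in_Dom_Psi_inv (w : R -> R) (k : R) (y : R) : Prop :=
  exists x, 0 < x /\ Psi w k x = y.

(* Psi^{-1}(y): the x > 0 with Psi(x) = y (unique, Psi strictly increasing). *)
Definition Psi_inv (w : R -> R) (k : R) (y : R) : R :=
  epsilon (inhabits 1) (fun x => 0 < x /\ Psi w k x = y).

From Stdlib Require Import Reals Lra Psatz ClassicalEpsilon.
Open Scope R_scope.

(* Let Z(t) be the right-hand side, so that u^m <= Z, Z is nondecreasing and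
   Z >= c^p > 0, and put Y = Z^(1/p).  Bounding u^n w(u) at times <= t by
   Z(t)^(n/m) w(Z(t)^(1/m)) and using Y^(1/k) = Z^(1/m), the chain rule gives
     (Psi o Y)' = Z' / (p Z^(n/m) w(Z^(1/m))) <= f(alpha) alpha' + g,
   so by the mean value theorem Psi(Y(t)) <= Psi(c) + int_0^alpha(t) f + int_0^t g.
   Since Psi is strictly increasing this yields Y(t) <= Psi^{-1}(...), and
   u(t) <= Z(t)^(1/m) = Y(t)^(1/k) concludes.

   Functions
   given on [0,oo) are extended to R (by clamp0 or tangent_extension) because
   Stdlib's integral and derivatives live on R. *)

(* Continuity at every real point: the hypothesis under which Stdlib's
   Riemann integral exists on every interval. *)
Definition ctn (f : R -> R) : Prop := forall x, continuity_pt f x.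

Lemma continuity_pt_intro f x :
  (forall eps, 0 < eps -> exists d, 0 < d /\
     forall y, Rabs (y - x) < d -> Rabs (f y - f x) < eps) ->
  continuity_pt f x.
Proof.
  intros H eps Heps. destruct (H eps Heps) as [d [Hd Hy]].
  exists d; split; [exact Hd|]. intros y [_ Hyx]. exact (Hy y Hyx).
Qed.

Lemma Rmax_lipschitz a x y : Rabs (Rmax a y - Rmax a x) <= Rabs (y - x).
Proof. unfold Rmax; destruct (Rle_dec a y), (Rle_dec a x); split_Rabs; lra. Qed.

Lemma ctn_Rmax a : ctn (Rmax a).
Proof.
  intros x; apply continuity_pt_intro; intros eps Heps; exists eps; split; [exact Heps|].
  intros y Hy; eapply Rle_lt_trans; [apply Rmax_lipschitz| exact Hy].
Qed.

Definition clamp0 (f : R -> R) (s : R) : R := f (Rmax 0 s).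

Lemma ctn_clamp0 f : cont_nonneg f -> ctn (clamp0 f).
Proof.
  intros Hf x; apply continuity_pt_intro; intros eps Heps.
  destruct (Hf (Rmax 0 x) (Rmax_l _ _) eps Heps) as [d [Hd H]].
  exists d; split; [exact Hd|]. intros y Hy. apply H; [apply Rmax_l|].
  eapply Rle_lt_trans; [apply Rmax_lipschitz| exact Hy].
Qed.

Lemma continuity_pt_comp_nonneg w q x :
  cont_nonneg w -> continuity_pt q x -> (forall s, 0 <= q s) ->
  continuity_pt (fun s => w (q s)) x.
Proof.
  intros Hw Hq Hpos.
  apply continuity_pt_locally_ext with (f := comp (clamp0 w) q) (a := 1); [lra| |].
  - intros y _. unfold comp, clamp0. now rewrite Rmax_right by apply Hpos.
  - apply continuity_pt_comp; [exact Hq| apply ctn_clamp0, Hw].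
Qed.

Lemma Rpower_pos x e : 0 < Rpower x e.
Proof. apply exp_pos. Qed.

Lemma rpow_pos x e : 0 < x -> rpow x e = Rpower x e.
Proof. intros; unfold rpow; destruct (Rle_dec x 0); lra. Qed.

Lemma rpow_nonneg x e : 0 <= rpow x e.
Proof. unfold rpow; destruct (Rle_dec x 0); [lra| left; apply Rpower_pos]. Qed.

Lemma ctn_rpow e : 0 < e -> ctn (fun y => rpow y e).
Proof.
  intros He x. destruct (Rtotal_order x 0) as [Hx|[Hx|Hx]].
  - apply continuity_pt_locally_ext with (f := fun _ => 0) (a := - x); [lra| |].
    + intros y Hy; unfold Rdist in Hy. unfold rpow. destruct (Rle_dec y 0); [reflexivity|].
      split_Rabs; lra.
    + apply continuity_pt_const. intros a b; reflexivity.
  - subst x. apply continuity_pt_intro. intros eps Heps.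
    exists (Rpower eps (/ e)). split; [apply Rpower_pos|].
    intros y Hy. rewrite Rminus_0_r in Hy.
    unfold rpow at 2. destruct (Rle_dec 0 0) as [_|]; [|lra]. rewrite Rminus_0_r.
    unfold rpow. destruct (Rle_dec y 0) as [|Hy0].
    + rewrite Rabs_R0; exact Heps.
    + rewrite Rabs_pos_eq by (left; apply Rpower_pos). rewrite Rabs_pos_eq in Hy by lra.
      replace eps with (Rpower (Rpower eps (/ e)) e).
      * apply Rlt_Rpower_l; lra.
      * rewrite Rpower_mult, Rinv_l by lra. now apply Rpower_1.
  - apply continuity_pt_locally_ext with (f := fun y => Rpower y e) (a := x); [exact Hx| |].
    + intros y Hy; unfold Rdist in Hy. rewrite rpow_pos; [reflexivity|]. split_Rabs; lra.
    + apply derivable_continuous_pt. exists (e * Rpower x (e - 1)).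
      now apply derivable_pt_lim_power.
Qed.

Lemma le_root_of_rpow_le x z m :
  0 < m -> 0 <= x -> 0 < z -> rpow x m <= z -> x <= Rpower z (/ m).
Proof.
  intros Hm Hx Hz H.
  destruct (Rle_lt_dec x 0) as [Hx0|Hx0].
  { left; eapply Rle_lt_trans; [exact Hx0| apply Rpower_pos]. }
  rewrite rpow_pos in H by exact Hx0.
  destruct (Rle_lt_dec x (Rpower z (/ m))) as [|Hgt]; [assumption| exfalso].
  assert (Hlt : Rpower (Rpower z (/ m)) m < Rpower x m)
    by (apply Rlt_Rpower_l; [exact Hm| split; [apply Rpower_pos| exact Hgt]]).
  rewrite Rpower_mult, Rinv_l, Rpower_1 in Hlt by lra. lra.
Qed.

Lemma rpow_le_of_root x z m n :
  0 < n -> 0 <= x <= Rpower z (/ m) -> rpow x n <= Rpower z (/ m * n).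
Proof.
  intros Hn [Hx Hxz]. destruct (Rle_lt_dec x 0) as [Hx0|Hx0].
  - unfold rpow. destruct (Rle_dec x 0); [left; apply Rpower_pos| lra].
  - rewrite rpow_pos, <- Rpower_mult by exact Hx0. apply Rle_Rpower_l; lra.
Qed.
Lemma integral_RiemannInt f a b (pr : Riemann_integrable f a b) :
  integral f a b = RiemannInt pr.
Proof.
  unfold integral.
  destruct (epsilon_spec (inhabits 0)
              (fun I => exists pr : Riemann_integrable f a b, RiemannInt pr = I))
    as [pr' <-].
  - exists (RiemannInt pr), pr; reflexivity.
  - apply RiemannInt_P5.
Qed.
Arguments integral_RiemannInt {f a b}.

Definition ctn_Riemann_integrable f a b (H : ctn f) : Riemann_integrable f a b.
Proof.
  destruct (Rle_dec a b) as [Hab|Hab].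
  - apply continuity_implies_RiemannInt; auto.
  - apply RiemannInt_P1. apply continuity_implies_RiemannInt; [lra| auto].
Defined.

Lemma integral_chasles f a b c :
  ctn f -> integral f a b + integral f b c = integral f a c.
Proof.
  intros H.
  rewrite (integral_RiemannInt (ctn_Riemann_integrable f a b H)),
    (integral_RiemannInt (ctn_Riemann_integrable f b c H)),
    (integral_RiemannInt (ctn_Riemann_integrable f a c H)).
  apply RiemannInt_P26.
Qed.

Lemma integral_refl f a : integral f a a = 0.
Proof. rewrite (integral_RiemannInt (RiemannInt_P7 f a)). apply RiemannInt_P9. Qed.

Lemma integral_nonneg f a b :
  ctn f -> a <= b -> (forall x, a <= x <= b -> 0 <= f x) -> 0 <= integral f a b.
Proof.
  intros H Hab Hf. rewrite (integral_RiemannInt (ctn_Riemann_integrable f a b H)).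
  rewrite <- (Rmult_0_l (b - a)), <- (RiemannInt_P15 (RiemannInt_P14 a b 0)).
  apply RiemannInt_P19; [exact Hab|]. intros x Hx; apply Hf; lra.
Qed.

Lemma integral_mono f a x y :
  ctn f -> (forall s, 0 <= f s) -> x <= y -> integral f a x <= integral f a y.
Proof.
  intros H Hf Hxy. rewrite <- (integral_chasles f a x y H).
  assert (0 <= integral f x y) by (apply integral_nonneg; auto). lra.
Qed.

Lemma integral_ext f g a b :
  ctn g -> (forall x, Rmin a b <= x <= Rmax a b -> f x = g x) ->
  integral f a b = integral g a b.
Proof.
  intros Hg Hfg.
  assert (prf : Riemann_integrable f a b).
  { apply Riemann_integrable_ext with g;
      [intros; symmetry; auto| apply ctn_Riemann_integrable; exact Hg]. }
  rewrite (integral_RiemannInt prf), (integral_RiemannInt (ctn_Riemann_integrable g a b Hg)).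
  destruct (Rle_dec a b) as [Hab|Hab].
  - apply RiemannInt_P18; [exact Hab|]. intros x Hx; apply Hfg.
    rewrite Rmin_left, Rmax_right; lra.
  - rewrite (RiemannInt_P8 prf (RiemannInt_P1 prf)),
      (RiemannInt_P8 (ctn_Riemann_integrable g a b Hg) (ctn_Riemann_integrable g b a Hg)).
    f_equal. apply RiemannInt_P18; [lra|]. intros x Hx; apply Hfg.
    rewrite Rmin_right, Rmax_left; lra.
Qed.

Lemma integral_deriv f a x :
  ctn f -> derivable_pt_lim (fun y => integral f a y) x (f x).
Proof.
  intros Hf.
  set (lo := Rmin a x - 1). set (hi := Rmax a x + 1).
  assert (Hlh : lo <= hi) by (unfold lo, hi; generalize (Rmin_l a x) (Rmax_l a x); lra).
  assert (C0 : forall y, lo <= y <= hi -> continuity_pt f y) by auto.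
  apply derivable_pt_lim_locally_ext
    with (f := fun y => primitive Hlh (FTC_P1 Hlh C0) y - integral f lo a) (a := lo) (b := hi).
  - unfold lo, hi; generalize (Rmin_r a x) (Rmax_r a x); lra.
  - intros z Hz. unfold primitive.
    destruct (Rle_dec lo z); [|lra]. destruct (Rle_dec z hi); [|lra].
    rewrite <- integral_RiemannInt, <- (integral_chasles f lo a z Hf). ring.
  - replace (f x) with (f x - 0) by ring. apply derivable_pt_lim_minus.
    + apply RiemannInt_P28. unfold lo, hi; generalize (Rmin_r a x) (Rmax_r a x); lra.
    + apply derivable_pt_lim_const.
Qed.

Lemma integral_clamp0 h b :
  ctn (clamp0 h) -> 0 <= b -> integral h 0 b = integral (clamp0 h) 0 b.
Proof.
  intros Hh Hb. apply integral_ext; [exact Hh|]. intros x Hx.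
  rewrite Rmin_left, Rmax_right in Hx by exact Hb.
  unfold clamp0. now rewrite Rmax_right by lra.
Qed.

Lemma le_of_deriv_nonpos H H' t :
  0 <= t ->
  (forall s, 0 <= s <= t -> derivable_pt_lim H s (H' s)) ->
  (forall s, 0 < s <= t -> H' s <= 0) ->
  H t <= H 0.
Proof.
  intros Ht HD Hneg. destruct Ht as [Ht|<-]; [|lra].
  destruct (MVT_cor2 H H' 0 t Ht HD) as [s [Heq Hs]].
  assert (H' s <= 0) by (apply Hneg; lra). nra.
Qed.

Lemma integral_lt h a x y :
  ctn h -> (forall s, 0 < h s) -> x < y -> integral h a x < integral h a y.
Proof.
  intros Hh Hpos Hxy.
  destruct (MVT_cor2 (fun z => integral h a z) h x y Hxy
              (fun s _ => integral_deriv h a s Hh)) as [s [Heq _]].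
  assert (0 < h s * (y - x)) by (apply Rmult_lt_0_compat; [apply Hpos| lra]).
  lra.
Qed.

(* A function on [0,oo) extended to the left by its tangent line at 0; this
   turns the one-sided derivative at 0 of deriv_nonneg into a two-sided one. *)
Definition tangent_extension (al al' : R -> R) (s : R) : R :=
  if Rle_dec 0 s then al s else al 0 + al' 0 * s.

Lemma tangent_extension_nonneg al al' s : 0 <= s -> tangent_extension al al' s = al s.
Proof. intros; unfold tangent_extension; destruct (Rle_dec 0 s); lra. Qed.

Lemma tangent_extension_deriv al al' x :
  deriv_nonneg al al' -> 0 <= x -> derivable_pt_lim (tangent_extension al al') x (al' x).
Proof.
  intros Hd Hx eps Heps.
  destruct (Hd x Hx eps Heps) as [d [Hdp Hy]].
  destruct Hx as [Hx|<-].
  - assert (Hm : 0 < Rmin d x) by (apply Rmin_pos; lra).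
    exists (mkposreal _ Hm). simpl. intros h Hh Hlt.
    assert (Hmd := Rmin_l d x). assert (Hmx := Rmin_r d x).
    rewrite !tangent_extension_nonneg by (split_Rabs; lra).
    specialize (Hy (x + h)). replace (x + h - x) with h in Hy by ring.
    apply Hy; [split_Rabs; lra| lra| lra].
  - exists (mkposreal _ Hdp). simpl. intros h Hh Hlt.
    destruct (Rle_dec 0 h) as [Hp|Hn].
    + rewrite !tangent_extension_nonneg by lra. specialize (Hy (0 + h)).
      replace (0 + h - 0) with h in Hy by ring.
      apply Hy; [lra| lra| exact Hlt].
    + unfold tangent_extension. destruct (Rle_dec 0 (0 + h)); [lra|].
      destruct (Rle_dec 0 0); [|lra].
      replace ((al 0 + al' 0 * (0 + h) - al 0) / h - al' 0) with 0 by (field; lra).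
      rewrite Rabs_R0; lra.
Qed.

Lemma deriv_nonneg_of_nondecr al al' x :
  deriv_nonneg al al' -> nondecr_nonneg al -> 0 < x -> 0 <= al' x.
Proof.
  intros Hd Hm Hx. destruct (Rle_lt_dec 0 (al' x)) as [|Hn]; [assumption| exfalso].
  destruct (Hd x (Rlt_le _ _ Hx) (- al' x / 2)) as [d [Hdp Hy]]; [lra|].
  specialize (Hy (x + d / 2)). replace (x + d / 2 - x) with (d / 2) in Hy by ring.
  assert (Hq : 0 <= (al (x + d / 2) - al x) / (d / 2)).
  { assert (al x <= al (x + d / 2)) by (apply Hm; lra).
    apply Rmult_le_pos; [lra| left; apply Rinv_0_lt_compat; lra]. }
  assert (Habs : Rabs (d / 2) < d) by (rewrite Rabs_pos_eq; lra).
  specialize (Hy ltac:(lra) ltac:(lra) Habs). split_Rabs; lra.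
Qed.

Section PsiProperties.

Variables (w : R -> R) (k : R).
Hypotheses (w_cont : cont_nonneg w) (w_pos : forall x, 0 < x -> 0 < w x) (k_pos : 0 < k).

(* The integrand of Psi with its argument clamped into [a,oo): for a > 0 it is
   continuous and positive on all of R, and it agrees with the true integrand
   of Psi on [a,oo). *)
Definition psi_integrand (a s : R) : R := / w (rpow (Rmax a s) (/ k)).

Lemma rpow_Rmax_pos a s : 0 < a -> 0 < rpow (Rmax a s) (/ k).
Proof.
  intros Ha. rewrite rpow_pos by (generalize (Rmax_l a s); lra). apply Rpower_pos.
Qed.

Lemma psi_integrand_pos a s : 0 < a -> 0 < psi_integrand a s.
Proof. intros Ha. apply Rinv_0_lt_compat, w_pos, rpow_Rmax_pos, Ha. Qed.

Lemma ctn_psi_integrand a : 0 < a -> ctn (psi_integrand a).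
Proof.
  intros Ha x.
  assert (Hq : continuity_pt (fun s => rpow (Rmax a s) (/ k)) x)
    by exact (continuity_pt_comp (Rmax a) (fun y => rpow y (/ k)) x (ctn_Rmax a x)
                (ctn_rpow (/ k) (Rinv_0_lt_compat _ k_pos) _)).
  apply continuity_pt_inv.
  - apply continuity_pt_comp_nonneg; [exact w_cont| exact Hq|].
    intros s; left; apply rpow_Rmax_pos, Ha.
  - apply Rgt_not_eq, w_pos, rpow_Rmax_pos, Ha.
Qed.

Lemma Psi_clamped a x : 0 < a <= 1 -> a <= x -> Psi w k x = integral (psi_integrand a) 1 x.
Proof.
  intros Ha Hx. unfold Psi. apply integral_ext; [apply ctn_psi_integrand; lra|].
  intros y Hy. assert (a <= Rmin 1 x) by (apply Rmin_glb; lra).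
  unfold psi_integrand. rewrite Rmax_right by lra. reflexivity.
Qed.

Lemma Psi_le_inv x y : 0 < x -> 0 < y -> Psi w k x <= Psi w k y -> x <= y.
Proof.
  intros Hx Hy HP. destruct (Rle_lt_dec x y) as [|Hyx]; [assumption| exfalso].
  set (a := Rmin 1 y).
  assert (Ha : 0 < a <= 1) by (split; [apply Rmin_pos; lra| apply Rmin_l]).
  assert (Hay : a <= y) by apply Rmin_r.
  rewrite (Psi_clamped a x), (Psi_clamped a y) in HP by (auto; lra).
  assert (integral (psi_integrand a) 1 y < integral (psi_integrand a) 1 x)
    by (apply integral_lt; [apply ctn_psi_integrand| intros; apply psi_integrand_pos|]; lra).
  lra.
Qed.

Lemma Psi_deriv x : 0 < x -> derivable_pt_lim (Psi w k) x (/ w (rpow x (/ k))).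
Proof.
  intros Hx. set (a := Rmin 1 (x / 2)).
  assert (Ha : 0 < a <= 1) by (split; [apply Rmin_pos; lra| apply Rmin_l]).
  assert (Hax : a < x) by (generalize (Rmin_r 1 (x / 2)); fold a; lra).
  replace (/ w (rpow x (/ k))) with (psi_integrand a x)
    by (unfold psi_integrand; now rewrite Rmax_right by lra).
  apply derivable_pt_lim_locally_ext
    with (f := fun y => integral (psi_integrand a) 1 y) (a := a) (b := x + 1); [lra| |].
  - intros z Hz. symmetry; apply Psi_clamped; lra.
  - apply integral_deriv, ctn_psi_integrand; lra.
Qed.

End PsiProperties.

Lemma Psi_inv_spec w k y :
  in_Dom_Psi_inv w k y -> 0 < Psi_inv w k y /\ Psi w k (Psi_inv w k y) = y.
Proof. intros Hy. exact (epsilon_spec (inhabits 1) _ Hy). Qed.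

Section BihariEstimate.

Variables (m n c : R) (f g w alpha alpha' u : R -> R).
Hypotheses (n_pos : 0 < n) (n_lt_m : n < m) (c_pos : 0 < c).
Hypotheses (f_cont : cont_nonneg f) (f_nonneg : nonneg_valued f)
  (g_cont : cont_nonneg g) (g_nonneg : nonneg_valued g).
Hypotheses (w_cont : cont_nonneg w) (w_nonneg : nonneg_valued w)
  (w_mono : nondecr_nonneg w) (w_pos : forall x, 0 < x -> 0 < w x).
Hypotheses (alpha_nonneg : nonneg_valued alpha) (alpha_deriv : deriv_nonneg alpha alpha')
  (alpha_mono : nondecr_nonneg alpha) (alpha_le : forall t, 0 <= t -> alpha t <= t).
Hypotheses (u_cont : cont_nonneg u) (u_nonneg : nonneg_valued u).

Let k := m - n.
Let p := m / k.

Hypothesis u_ineq : forall t, 0 <= t ->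
  rpow (u t) m <=
    rpow c p +
    p * (integral (fun s => f s * rpow (u s) n * w (u s)) 0 (alpha t) +
         integral (fun s => g s * rpow (u s) n * w (u s)) 0 t).

Let K (h : R -> R) : R -> R := clamp0 (fun s => h s * rpow (u s) n * w (u s)).
Let A : R -> R := tangent_extension alpha alpha'.
Let Z (s : R) : R := Rpower c p + p * (integral (K f) 0 (A s) + integral (K g) 0 s).
(* Y = Z^(1/p) is the quantity that Psi linearizes. *)
Let Y (s : R) : R := Rpower (Z s) (/ p).
(* G(t) = int_0^alpha(t) f + int_0^t g, the growth allowed for Psi(Y). *)
Let G (s : R) : R := integral (clamp0 f) 0 (A s) + integral (clamp0 g) 0 s.

Lemma k_pos : 0 < k.
Proof. unfold k; lra. Qed.

Lemma p_pos : 0 < p.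
Proof. unfold p, k; apply Rdiv_lt_0_compat; lra. Qed.

Lemma A_nonneg s : 0 <= s -> A s = alpha s.
Proof. apply tangent_extension_nonneg. Qed.

Lemma alpha_0 : alpha 0 = 0.
Proof. generalize (alpha_le 0 (Rle_refl 0)) (alpha_nonneg 0 (Rle_refl 0)); lra. Qed.

Lemma ctn_K h : cont_nonneg h -> ctn (K h).
Proof.
  intros Hh x. unfold K, clamp0.
  apply (continuity_pt_mult (fun s => h (Rmax 0 s) * rpow (u (Rmax 0 s)) n));
    [apply (continuity_pt_mult (fun s => h (Rmax 0 s)))|].
  - apply ctn_clamp0, Hh.
  - exact (continuity_pt_comp (clamp0 u) (fun y => rpow y n) x
             (ctn_clamp0 u u_cont x) (ctn_rpow n n_pos _)).
  - apply continuity_pt_comp_nonneg; [exact w_cont| apply ctn_clamp0, u_cont|].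
    intros s; apply u_nonneg, Rmax_l.
Qed.

Lemma K_nonneg h : nonneg_valued h -> forall s, 0 <= K h s.
Proof.
  intros Hh s. unfold K, clamp0.
  apply Rmult_le_pos; [apply Rmult_le_pos|]; auto using rpow_nonneg, Rmax_l.
Qed.

Lemma Z_ge s : 0 <= s -> Rpower c p <= Z s.
Proof.
  intros Hs. unfold Z. rewrite A_nonneg by exact Hs.
  assert (0 <= integral (K f) 0 (alpha s))
    by (apply integral_nonneg; [apply ctn_K, f_cont| apply alpha_nonneg, Hs|];
        intros; apply K_nonneg, f_nonneg).
  assert (0 <= integral (K g) 0 s)
    by (apply integral_nonneg; [apply ctn_K, g_cont| exact Hs|]; intros; apply K_nonneg, g_nonneg).
  generalize p_pos; nra.
Qed.

Lemma Z_pos s : 0 <= s -> 0 < Z s.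
Proof. intros Hs. generalize (Z_ge s Hs) (Rpower_pos c p); lra. Qed.

Lemma Z_mono r s : 0 <= r <= s -> Z r <= Z s.
Proof.
  intros Hrs. unfold Z. rewrite !A_nonneg by lra.
  assert (integral (K f) 0 (alpha r) <= integral (K f) 0 (alpha s))
    by (apply integral_mono; [apply ctn_K, f_cont| apply K_nonneg, f_nonneg| apply alpha_mono; lra]).
  assert (integral (K g) 0 r <= integral (K g) 0 s)
    by (apply integral_mono; [apply ctn_K, g_cont| apply K_nonneg, g_nonneg| lra]).
  generalize p_pos; nra.
Qed.

Lemma u_pow_le_Z s : 0 <= s -> rpow (u s) m <= Z s.
Proof.
  intros Hs. eapply Rle_trans; [apply u_ineq, Hs|]. right.
  unfold Z, K. rewrite rpow_pos, A_nonneg by lra.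
  rewrite <- !integral_clamp0; [reflexivity| apply (ctn_K g g_cont)| exact Hs|
    apply (ctn_K f f_cont)| apply alpha_nonneg, Hs].
Qed.

(* Since u^m <= Z is nondecreasing, the kernel at r <= s is bounded via Z(s). *)
Lemma K_bound h r s : nonneg_valued h -> 0 <= r <= s ->
  K h r <= h r * (Rpower (Z s) (/ m * n) * w (Rpower (Z s) (/ m))).
Proof.
  intros Hh Hrs.
  assert (Hroot : u r <= Rpower (Z s) (/ m)).
  { apply le_root_of_rpow_le; [lra| apply u_nonneg; lra| apply Z_pos; lra|].
    eapply Rle_trans; [apply u_pow_le_Z| apply Z_mono]; lra. }
  assert (Hur := u_nonneg r ltac:(lra)).
  unfold K, clamp0. rewrite Rmax_right, Rmult_assoc by lra.
  apply Rmult_le_compat_l; [apply Hh; lra|].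
  apply Rmult_le_compat; [apply rpow_nonneg| apply w_nonneg, Hur| |].
  - apply rpow_le_of_root; lra.
  - apply w_mono; lra.
Qed.

Lemma integral_A_deriv h s : ctn h -> 0 <= s ->
  derivable_pt_lim (fun s => integral h 0 (A s)) s (h (A s) * alpha' s).
Proof.
  intros Hh Hs.
  exact (derivable_pt_lim_comp A (fun y => integral h 0 y) s _ _
           (tangent_extension_deriv alpha alpha' s alpha_deriv Hs) (integral_deriv h 0 (A s) Hh)).
Qed.

Lemma Z_deriv s : 0 <= s ->
  derivable_pt_lim Z s (p * (K f (A s) * alpha' s + K g s)).
Proof.
  intros Hs. rewrite <- (Rplus_0_l (p * _)).
  apply (derivable_pt_lim_plus (fct_cte (Rpower c p))); [apply derivable_pt_lim_const|].
  apply (derivable_pt_lim_scal (fun s => integral (K f) 0 (A s) + integral (K g) 0 s)).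
  apply derivable_pt_lim_plus.
  - apply integral_A_deriv; [apply ctn_K, f_cont| exact Hs].
  - apply integral_deriv, ctn_K, g_cont.
Qed.

Lemma G_deriv s : 0 <= s ->
  derivable_pt_lim G s (clamp0 f (A s) * alpha' s + clamp0 g s).
Proof.
  intros Hs. apply derivable_pt_lim_plus.
  - apply integral_A_deriv; [apply ctn_clamp0, f_cont| exact Hs].
  - apply integral_deriv, ctn_clamp0, g_cont.
Qed.

(* The chain rule: (Psi o Y)' = Z' / (p Z^(n/m) w(Z^(1/m))), using
   Y^(1/k) = Z^(1/m) and Z^(1/p - 1) = Z^(-n/m). *)
Lemma Psi_Y_deriv s : 0 <= s ->
  derivable_pt_lim (fun s => Psi w k (Y s)) s
    ((K f (A s) * alpha' s + K g s) / (Rpower (Z s) (/ m * n) * w (Rpower (Z s) (/ m)))).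
Proof.
  intros Hs. assert (HZ := Z_pos s Hs). assert (Hp := p_pos). assert (Hk := k_pos).
  assert (HwQ : 0 < w (Rpower (Z s) (/ m))) by apply w_pos, Rpower_pos.
  assert (HY : rpow (Y s) (/ k) = Rpower (Z s) (/ m)).
  { unfold Y. rewrite rpow_pos, Rpower_mult by apply Rpower_pos.
    f_equal. unfold p, k. field; lra. }
  assert (Hexp : Rpower (Z s) (/ p - 1) = / Rpower (Z s) (/ m * n)).
  { rewrite <- Rpower_Ropp. f_equal. unfold p, k. field; lra. }
  assert (HE := Rpower_pos (Z s) (/ m * n)).
  replace (_ / _) with (/ w (rpow (Y s) (/ k)) *
                         (/ p * Rpower (Z s) (/ p - 1) * (p * (K f (A s) * alpha' s + K g s))))
    by (rewrite HY, Hexp; field; lra).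
  apply (derivable_pt_lim_comp Y (Psi w k)).
  - exact (derivable_pt_lim_comp Z (fun x => Rpower x (/ p)) s _ _
             (Z_deriv s Hs) (derivable_pt_lim_power (Z s) (/ p) HZ)).
  - apply Psi_deriv; [exact w_cont| exact w_pos| exact Hk| apply Rpower_pos].
Qed.

Lemma Psi_Y_rate s : 0 < s ->
  (K f (A s) * alpha' s + K g s) / (Rpower (Z s) (/ m * n) * w (Rpower (Z s) (/ m)))
  <= clamp0 f (A s) * alpha' s + clamp0 g s.
Proof.
  intros Hs.
  set (B := Rpower (Z s) (/ m * n) * w (Rpower (Z s) (/ m))).
  assert (HB : 0 < B) by (apply Rmult_lt_0_compat; [|apply w_pos]; apply Rpower_pos).
  assert (Hf := K_bound f (alpha s) s f_nonneg
                  (conj (alpha_nonneg s ltac:(lra)) (alpha_le s ltac:(lra)))).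
  assert (Hg := K_bound g s s g_nonneg ltac:(lra)). fold B in Hf, Hg.
  assert (Ha' := deriv_nonneg_of_nondecr alpha alpha' s alpha_deriv alpha_mono Hs).
  unfold clamp0. rewrite A_nonneg, !Rmax_right by (try apply alpha_nonneg; lra).
  apply (Rmult_le_reg_r B); [exact HB|].
  unfold Rdiv. rewrite Rmult_assoc, Rinv_l, Rmult_1_r by lra.
  nra.
Qed.

Lemma Y_0 : Y 0 = c.
Proof.
  unfold Y, Z. rewrite A_nonneg, alpha_0, !integral_refl, Rplus_0_r, Rmult_0_r, Rplus_0_r
    by apply Rle_refl.
  rewrite Rpower_mult, Rinv_r by (generalize p_pos; lra). apply Rpower_1, c_pos.
Qed.

Lemma Psi_Y_le t : 0 <= t ->
  Psi w k (Y t) <= Psi w k c + integral f 0 (alpha t) + integral g 0 t.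
Proof.
  intros Ht.
  assert (Hmono := le_of_deriv_nonpos (fun s => Psi w k (Y s) - G s) _ t Ht
    (fun s Hs => derivable_pt_lim_minus _ _ s _ _ (Psi_Y_deriv s (proj1 Hs)) (G_deriv s (proj1 Hs)))
    (fun s Hs => Rle_minus _ _ (Psi_Y_rate s (proj1 Hs)))).
  unfold G in Hmono. rewrite Y_0, !A_nonneg, alpha_0, !integral_refl in Hmono by lra.
  rewrite (integral_clamp0 f), (integral_clamp0 g);
    [lra| apply ctn_clamp0, g_cont| exact Ht| apply ctn_clamp0, f_cont| apply alpha_nonneg, Ht].
Qed.

Lemma u_le_Y t : 0 <= t -> u t <= Rpower (Y t) (/ k).
Proof.
  intros Ht. unfold Y. rewrite Rpower_mult.
  replace (/ p * / k) with (/ m) by (unfold p, k; field; lra).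
  apply le_root_of_rpow_le; [lra| apply u_nonneg, Ht| apply Z_pos, Ht| apply u_pow_le_Z, Ht].
Qed.

Theorem bihari_estimate t : 0 <= t ->
  exists y, 0 < y /\ u t <= Rpower y (/ k) /\
    Psi w k y <= Psi w k c + integral f 0 (alpha t) + integral g 0 t.
Proof.
  intros Ht. exists (Y t). split; [apply Rpower_pos|].
  split; [apply u_le_Y, Ht| apply Psi_Y_le, Ht].
Qed.

End BihariEstimate.


Theorem corollary3 (m n c : R) (f g w alpha u : R -> R) (tau : R) :
  0 < n -> n < m -> 0 < c ->
  C0_nonneg f -> C0_nonneg g ->
  C0_nonneg w -> nondecr_nonneg w -> (forall x, 0 < x -> 0 < w x) ->
  C1_nonneg alpha -> nondecr_nonneg alpha -> (forall t, 0 <= t -> alpha t <= t) ->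
  C0_nonneg u ->
  (forall t, 0 <= t ->
     rpow (u t) m <=
       rpow c (m / (m - n)) +
       m / (m - n) *
         (integral (fun s => f s * rpow (u s) n * w (u s)) 0 (alpha t) +
          integral (fun s => g s * rpow (u s) n * w (u s)) 0 t)) ->
  0 < tau ->
  (forall t, 0 <= t <= tau ->
     in_Dom_Psi_inv w (m - n)
       (Psi w (m - n) c + integral f 0 (alpha t) + integral g 0 t)) ->
  forall t, 0 <= t <= tau ->
    u t <= rpow (Psi_inv w (m - n)
                   (Psi w (m - n) c + integral f 0 (alpha t) + integral g 0 t))
                (/ (m - n)).
Proof.
  intros Hn Hnm Hc [Hfc Hfp] [Hgc Hgp] [Hwc Hwp] Hwm Hwpos [Hap [alpha' [Hd _]]] Ham Hat
    [Huc Hup] Hineq _ Hdom t Ht.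
  destruct (bihari_estimate m n c f g w alpha alpha' u Hn Hnm Hc Hfc Hfp Hgc Hgp Hwc Hwp Hwm
              Hwpos Hap Hd Ham Hat Huc Hup Hineq t (proj1 Ht)) as [y [Hy [Huy HPsiy]]].
  destruct (Psi_inv_spec w (m - n) _ (Hdom t Ht)) as [Hx HPsix].
  set (x := Psi_inv w (m - n) _) in *.
  (* Psi is increasing, so Psi(y) <= Psi(x) gives y <= x. *)
  assert (Hyx : y <= x)
    by (apply (Psi_le_inv w (m - n)); [exact Hwc| exact Hwpos| lra| exact Hy| exact Hx| lra]).
  rewrite rpow_pos by exact Hx.
  eapply Rle_trans; [exact Huy|].
  apply Rle_Rpower_l; [left; apply Rinv_0_lt_compat; lra| lra].
Qed.
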